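(* For all $n,d,w\in\mathbb{N}$, $B_3(n,d,w)=A_2(n,d,w)$.
   Context: Notation: $\mathbb{F}_2=\{0,1\}$. For a code $S\subseteq\mathbb{F}_2^n$, $d_{\min}(S)$ is the minimum Hamming distance between distinct words of $S$ ($+\infty$ if $|S|\le 1$). Let $F\subseteq\mathbb{F}_2^n$ be the set of words of weight $w$. For $k\in\mathbb{Z}_{\ge 0}$, $\mathcal{C}_k$ is the set of codes $C\subseteq F$ with $|C|\le k$. For $j\le k$ and $D\in\mathcal{C}_j$, $\mathcal{C}_j(D):=\{C\in\mathcal{C}_j : C\supseteq D,\ |D|+2|C\setminus D|\le j\}$. For $x:\mathcal{C}_k\to\mathbb{R}$, $M_{j,D}(x)$ is the $\mathcal{C}_j(D)\times\mathcal{C}_j(D)$ matrix with entries $x(C\cup C')$. $A_k(n,d,w)$ is the supremum of $\sum_{v\in F}x(\{v\})$ over all $x:\mathcal{C}_k\to\mathbb{R}$ with $x(\emptyset)=1$, $x(S)=0$ whenever $d_{\min}(S)<d$, and $M_{k,D}(x)$ positive semidefinite for every $D\in\mathcal{C}_k$. For $k\ge 3$, $B_k(n,d,w)$ is the supremum of $\sum_{v\in F}x(\{v\})$ over all $x:\mathcal{C}_k\to\mathbb{R}$ with $x(\emptyset)=1$, $x(S)=0$ whenever $d_{\min}(S)<d$, $M_{k-1,D}(x)$ positive semidefinite for every $D\in\mathcal{C}_{k-1}$ with $|D|<2$, and $M_{k,D}(x)$ positive semidefinite for every $D\in\mathcal{C}_k$ with $|D|\ge 2$. *)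

From Stdlib Require Import Reals ClassicalEpsilon.
From mathcomp Require Import all_boot.

Unset Implicit Arguments.
Unset Strict Implicit.
Unset Printing Implicit Defensive.

Definition word (n : nat) := {ffun 'I_n -> bool}.

Definition weight n (u : word n) : nat := #|[set i | u i]|.
Definition hamming n (u v : word n) : nat := #|[set i | u i != v i]|.

Definition Fw (n w : nat) : {set word n} := [set u : word n | weight n u == w].

(* "d_min(S) < d", with d_min(S) = +oo when |S| <= 1:
   some two distinct words of S are at Hamming distance < d. *)
Definition dmin_lt n (S : {set word n}) (d : nat) : bool :=
  [exists u in S, exists v in S, (u != v) && (hamming n u v < d)].

Definition Ck (n w k : nat) : {set {set word n}} :=
  [set C : {set word n} | (C \subset Fw n w) && (#|C| <= k)].

Definition CjD (n w j : nat) (D : {set word n}) : {set {set word n}} :=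
  [set C : {set word n} | (C \in Ck n w j) && (D \subset C) && (#|D| + 2 * #|C :\: D| <= j)].

(* M_{j,D}(x) positive semidefinite: the (symmetric) matrix with entries
   x(C u C'), C, C' in C_j(D), has nonnegative quadratic form. *)
Definition psdM (n w j : nat) (D : {set word n}) (x : {set word n} -> R) : Prop :=
  forall v : {set word n} -> R,
    Rle R0 (\big[Rplus/R0]_(C in CjD n w j D)
            \big[Rplus/R0]_(C' in CjD n w j D) (Rmult (Rmult (v C) (v C')) (x (C :|: C')))).

Definition objective n w (x : {set word n} -> R) : R :=
  \big[Rplus/R0]_(u in Fw n w) x [set u].

Definition base_feasible (k n d w : nat) (x : {set word n} -> R) : Prop :=
  x set0 = R1 /\
  (forall S, S \in Ck n w k -> dmin_lt n S d -> x S = R0).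

Definition feasA (k n d w : nat) (t : R) : Prop :=
  exists x : {set word n} -> R,
    base_feasible k n d w x /\
    (forall D, D \in Ck n w k -> psdM n w k D x) /\
    t = objective n w x.

Definition feasB (k n d w : nat) (t : R) : Prop :=
  exists x : {set word n} -> R,
    base_feasible k n d w x /\
    (forall D, D \in Ck n w k.-1 -> #|D| < 2 -> psdM n w k.-1 D x) /\
    (forall D, D \in Ck n w k -> 2 <= #|D| -> psdM n w k D x) /\
    t = objective n w x.

Inductive ereal := Fin of R | PInf | MInf.

Definition esup (E : R -> Prop) : ereal :=
  match excluded_middle_informative (exists t, E t) with
  | right _ => MInf
  | left Hne =>
      match excluded_middle_informative (bound E) with
      | left Hb => Fin (proj1_sig (completeness E Hb Hne))
      | right _ => PInf
      end
  end.

Definition A_val (k n d w : nat) : ereal := esup (feasA k n d w).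
Definition B_val (k n d w : nat) : ereal := esup (feasB k n d w).

(* Only the sets of size at most 2 matter for A_2: the matrices M_{2,D} have
   entries x(C u C') with |C u C'| <= 2.  In B_3, the condition M_{3,D} >= 0
   for |D| >= 2 concerns the 1x1 matrix (x(D)) alone, since C_3(D) = {D}; for
   |D| = 2 this is the condition of A_2, and for |D| = 3 it is void once x is
   truncated to zero on sets of size 3.  Hence both programs have the same
   feasible objective values. *)
From Stdlib Require Import Reals Psatz FunctionalExtensionality PropExtensionality.
From HB Require Import structures.
From mathcomp Require Import all_boot zify.

Set Implicit Arguments.
Unset Strict Implicit.

HB.instance Definition _ :=
  Monoid.isComLaw.Build R R0 Rplus (fun a b c => esym (Rplus_assoc a b c))
    Rplus_comm Rplus_0_l.

Section Codes.

Variables n w : nat.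
Implicit Types (j k : nat) (C D S : {set word n}) (x y : {set word n} -> R).

Lemma Ck_mono j k : j <= k -> {subset Ck n w j <= Ck n w k}.
Proof. by move=> jk C; rewrite !inE => /andP[-> /leq_trans->]. Qed.

Lemma CjD_singleton j D : D \in Ck n w j -> j < #|D| + 2 -> CjD n w j D = [set D].
Proof.
move=> HD lt_j; have /[!inE] /andP[DF Dj] := HD; apply/setP => C.
rewrite !inE; apply/idP/eqP => [/andP[/andP[_ DC] le_j]|->].
  2: by rewrite DF Dj subxx setDv cards0 muln0 addn0.
have : C :\: D == set0 by rewrite -cards_eq0; apply/eqP; lia.
by rewrite setD_eq0 => CD; apply/eqP; rewrite eqEsubset CD DC.
Qed.

Lemma card_setU_CjD j D C C' :
  C \in CjD n w j D -> C' \in CjD n w j D -> #|C :|: C'| <= j.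
Proof.
rewrite !inE => /andP[/andP[_ DC] le_C] /andP[/andP[_ DC'] le_C'].
have sub : C :|: C' \subset C :|: (C' :\: D).
  apply/subsetP => z; rewrite !inE; case/orP => [->//|zC'].
  by case zD: (z \in D); [rewrite (subsetP DC) | rewrite zC' orbT].
have := subset_leq_card sub; rewrite [#|C :|: (C' :\: D)|]cardsU.
have := cardsDS DC; have := subset_leq_card DC.
have := cardsDS DC'; have := subset_leq_card DC'; lia.
Qed.

Lemma psdM_singleton j D x : CjD n w j D = [set D] -> psdM n w j D x <-> Rle R0 (x D).
Proof.
rewrite /psdM => ->; split => [/(_ (fun _ => R1))|xD v]; rewrite !big_set1 setUid.
- lra.
- by apply: Rmult_le_pos => //; nra.
Qed.

Lemma eq_psdM j D x y :
  (forall S, #|S| <= j -> x S = y S) -> psdM n w j D x <-> psdM n w j D y.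
Proof.
suff psd_xy x' y' : (forall S, #|S| <= j -> x' S = y' S) ->
    psdM n w j D x' -> psdM n w j D y'.
  by move=> xy; split; apply: psd_xy => S /xy ->.
move=> xy psd_x v; have := psd_x v.
by under eq_bigr => C HC do under eq_bigr => C' HC'
  do rewrite (xy _ (card_setU_CjD HC HC')).
Qed.

Definition truncate j x S : R := if #|S| <= j then x S else R0.

Lemma truncate_small j x S : #|S| <= j -> truncate j x S = x S.
Proof. by rewrite /truncate => ->. Qed.

Lemma psdM_truncate j D x : psdM n w j D (truncate j x) <-> psdM n w j D x.
Proof. exact: eq_psdM (@truncate_small j x). Qed.

Lemma psdM_2_3 D x :
  D \in Ck n w 2 -> 2 <= #|D| -> psdM n w 2 D x <-> psdM n w 3 D x.
Proof.
move=> HD le2D; have HD3 := Ck_mono (leqnSn 2) HD.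
rewrite (psdM_singleton _ (CjD_singleton HD _)); last lia.
by rewrite (psdM_singleton _ (CjD_singleton HD3 _)); last lia.
Qed.

End Codes.

Lemma feasB3_feasA2 n d w t : feasB 3 n d w t -> feasA 2 n d w t.
Proof.
case=> x [[x0 xd] [psd_lo [psd_hi ->]]]; exists x; split; [split|split] => //.
- by move=> S /(Ck_mono (leqnSn 2)); apply: xd.
- move=> D HD; case: (ltnP #|D| 2) => [|le2D]; first exact: psd_lo.
  by apply/psdM_2_3 => //; apply: psd_hi (Ck_mono (leqnSn 2) HD) le2D.
Qed.

Lemma feasA2_feasB3 n d w t : feasA 2 n d w t -> feasB 3 n d w t.
Proof.
case=> x [[x0 xd] [psd ->]]; exists (truncate 2 x).
split; [split|split; [|split]].
- by rewrite truncate_small ?cards0.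
- move=> S HS dS; rewrite /truncate; case: ifP => // le2S.
  by apply: xd dS; move: HS; rewrite !inE => /andP[->].
- by move=> D HD _; apply/psdM_truncate/psd.
- move=> D HD le2D.
  apply/psdM_singleton; first by apply: CjD_singleton HD _; lia.
  rewrite /truncate; case: ifP => [le2D'|_]; last exact: Rle_refl.
  have HD2 : D \in Ck n w 2 by move: HD; rewrite !inE => /andP[->].
  have E2 : CjD n w 2 D = [set D] by apply: CjD_singleton HD2 _; lia.
  exact: (proj1 (psdM_singleton x E2) (psd D HD2)).
- by apply: eq_bigr => u _; rewrite truncate_small ?cards1.
Qed.

Theorem mainTheorem2 : forall n d w : nat, B_val 3 n d w = A_val 2 n d w.
Proof.
move=> n d w; rewrite /B_val /A_val.
suff -> : feasB 3 n d w = feasA 2 n d w by [].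
apply: functional_extensionality => t; apply: propositional_extensionality.
by split; [apply: feasB3_feasA2 | apply: feasA2_feasB3].
Qed.
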